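(* A set $\mathcal{E}\subseteq \mathcal{D}/d$ is closed in the metric space $(\mathcal{D}/d, d)$ if and only if the following condition holds: for every sequence $(A_i)_{i\in\mathbb{N}}$ in $\mathcal{E}$ such that the nets $\{\nu^+(\vee_{k=i}^j A_k): i,j\in\mathbb{N}, i\le j\}$ and $\{\nu^-(\vee_{k=i}^j A_k): i,j\in\mathbb{N}, i\le j\}$ converge to a common limit $L$, the net $\{\vee_{k=i}^j A_k : i,j\in\mathbb{N}, i\le j\}$ converges (in the metric $d$) to some $A\in\mathcal{E}$ with $\nu^+(A)=L$.
   Context: Here $\mathbb{N}=\{0,1,2,\dots\}$ and for $n\ge 1$, $n$ also denotes the set $\{0,1,\dots,n-1\}$. For $A\subseteq\mathbb{N}$, $\nu^+(A):=\limsup_{n\to\infty}|A\cap n|/n$, $\nu^-(A):=\liminf_{n\to\infty}|A\cap n|/n$, and $\mathcal{D}$ is the collection of $A\subseteq\mathbb{N}$ for which $\lim_{n\to\infty}|A\cap n|/n$ exists. Define $d(A,B):=\nu^+(A\triangle B)$ on $\mathcal{P}(\mathbb{N})$, and $[A]:=\{B\subseteq\mathbb{N}: d(A,B)=0\}$. Let $\mathcal{P}(\mathbb{N})/d:=\{[A]:A\subseteq\mathbb{N}\}$ and $\mathcal{D}/d:=\{[A]:A\in\mathcal{D}\}$, with metric $d([A],[B]):=d(A,B)$ and functions $\nu^\pm([A]):=\nu^\pm(A)$ (well defined). $\mathcal{P}(\mathbb{N})/d$ is partially ordered by $[A]\le[B]\iff \nu^+(A\setminus B)=0$, and $\vee$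 denotes the least upper bound in this order (so $\vee_{k=i}^j [A_k]=[\bigcup_{k=i}^j A_k]$). The index set $\{(i,j): i,j\in\mathbb{N}, i\le j\}$ is directed by the product order $(i,j)\le(k,l)\iff i\le k$ and $j\le l$. *)

From Stdlib Require Import Reals List.
From Coquelicot Require Import Coquelicot.
Open Scope R_scope.

Definition nset := nat -> bool.

Definition cnt (A : nset) (n : nat) : nat := length (filter A (seq 0 n)).

Definition ratio (A : nset) (n : nat) : R := INR (cnt A n) / INR n.

(* upper and lower asymptotic densities (finite since 0 <= ratio <= 1) *)
Definition nu_plus (A : nset) : R := real (LimSup_seq (ratio A)).
Definition nu_minus (A : nset) : R := real (LimInf_seq (ratio A)).

Definition inD (A : nset) : Prop := ex_finite_lim_seq (ratio A).

Definition symdiff (A B : nset) : nset := fun k => xorb (A k) (B k).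

Definition dd (A B : nset) : R := nu_plus (symdiff A B).

Definition union_range (A : nat -> nset) (i j : nat) : nset :=
  fun x => existsb (fun k => A k x) (seq i (S j - i)).

(* Convergence of a real-valued net indexed by {(i,j) : i <= j} directed by
   the product order. *)
Definition net_cvg (x : nat -> nat -> R) (L : R) : Prop :=
  forall eps : R, 0 < eps ->
    exists i0 j0 : nat, (i0 <= j0)%nat /\
      forall i j : nat, (i <= j)%nat -> (i0 <= i)%nat -> (j0 <= j)%nat ->
        Rabs (x i j - L) < eps.

(* A subset ℰ of 𝒟/d is encoded as a predicate on representatives that is
   contained in 𝒟 and saturated under d(·,·) = 0. *)
Definition quot_subset (E : nset -> Prop) : Prop :=
  (forall A, E A -> inD A) /\
  (forall A B, E A -> dd A B = 0 -> E B).

Definition closedD (E : nset -> Prop) : Prop :=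
  forall A, inD A -> ~ E A ->
    exists eps, 0 < eps /\ forall B, inD B -> dd A B < eps -> ~ E B.

From Stdlib Require Import Reals List Lia Lra Classical ClassicalEpsilon FunctionalExtensionality.
From Coquelicot Require Import Coquelicot.
Open Scope R_scope.

(* If the upper and lower densities of the finite unions [U i j] of the [A i]
   converge to a common [L], the net [U i j] is d-Cauchy: two unions lie in a
   common larger one, and [X ⊆ Y] gives [d(X, Y) <= nu_plus Y - nu_minus X].
   Since [d] is complete, the net converges to some [B]; [nu_plus] and [nu_minus]
   are 1-Lipschitz for [d], so [nu_plus B = nu_minus B = L], i.e. [B] lies in the
   density class, and [B] is a limit of the [A p = U p p], hence in a closed [E].
   Conversely, if [A] in the density class is adherent to [E], choose [B n] in [E]
   with [d(B n, A) < 2^-n]; the unions of the [B n] converge to [A], so the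
   condition returns some [B] in [E] at distance 0 from [A], and [A] is in [E].
   Completeness of [d] is proved by gluing a fast Cauchy sequence along blocks of
   geometrically growing length. *)


Lemma cnt_S A n : cnt A (S n) = (cnt A n + Nat.b2n (A n))%nat.
Proof.
  unfold cnt. rewrite seq_S, filter_app, length_app. simpl.
  destruct (A n); simpl; lia.
Qed.

Lemma cnt_le A n : (cnt A n <= n)%nat.
Proof. induction n as [|n IH]; [cbn; lia|]. rewrite cnt_S. destruct (A n); simpl; lia. Qed.

Lemma cnt_empty A n : (forall x, A x = false) -> cnt A n = 0%nat.
Proof. intros H. induction n as [|n IH]; [reflexivity|]. rewrite cnt_S, IH, H. reflexivity. Qed.

Lemma cnt_le_add X Y Z :
  (forall x, Nat.b2n (X x) <= Nat.b2n (Y x) + Nat.b2n (Z x))%nat ->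
  forall n, (cnt X n <= cnt Y n + cnt Z n)%nat.
Proof. intros H n. induction n as [|n IH]; [cbn; lia|]. rewrite !cnt_S. specialize (H n). lia. Qed.

Lemma cnt_add_le X Y Z :
  (forall x, Nat.b2n (X x) + Nat.b2n (Y x) <= Nat.b2n (Z x))%nat ->
  forall n, (cnt X n + cnt Y n <= cnt Z n)%nat.
Proof. intros H n. induction n as [|n IH]; [cbn; lia|]. rewrite !cnt_S. specialize (H n). lia. Qed.

Lemma cnt_agree A B N k :
  (forall x, (N <= x < N + k)%nat -> A x = B x) ->
  (cnt A (N + k) + cnt B N = cnt A N + cnt B (N + k))%nat.
Proof.
  intros H. induction k as [|k IH]; [rewrite Nat.add_0_r; lia|].
  rewrite Nat.add_succ_r, !cnt_S, (H (N + k)%nat) by lia.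
  specialize (IH ltac:(intros x Hx; apply H; lia)). lia.
Qed.

Lemma Rinv_INR_nonneg n : 0 <= / INR n.
Proof.
  destruct n as [|n]; [simpl; rewrite Rinv_0; lra|].
  apply Rlt_le, Rinv_0_lt_compat, lt_0_INR; lia.
Qed.

Lemma ratio_bounds A n : 0 <= ratio A n <= 1.
Proof.
  unfold ratio. destruct n as [|n]; [cbn; unfold Rdiv; rewrite Rmult_0_l; lra|].
  assert (Hn : 0 < INR (S n)) by (apply lt_0_INR; lia).
  split; [apply Rdiv_le_0_compat; [apply pos_INR | exact Hn]|].
  apply (Rmult_le_reg_r (INR (S n))); [exact Hn|]. unfold Rdiv.
  rewrite Rmult_assoc, Rinv_l, Rmult_1_r, Rmult_1_l by lra.
  apply le_INR, cnt_le.
Qed.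

Lemma cnt_le_of_ratio A N c : (0 < N)%nat -> ratio A N <= c -> INR (cnt A N) <= c * INR N.
Proof.
  intros HN Hc. assert (HN' : 0 < INR N) by (apply lt_0_INR; exact HN).
  unfold ratio in Hc. apply Rle_div_l in Hc; lra.
Qed.

Lemma ratio_le_of_cnt A N c : (0 < N)%nat -> INR (cnt A N) <= c * INR N -> ratio A N <= c.
Proof.
  intros HN Hc. assert (HN' : 0 < INR N) by (apply lt_0_INR; exact HN).
  unfold ratio. apply Rle_div_l; lra.
Qed.

Lemma ratio_le_add X Y Z :
  (forall x, Nat.b2n (X x) <= Nat.b2n (Y x) + Nat.b2n (Z x))%nat ->
  forall n, ratio X n <= ratio Y n + ratio Z n.
Proof.
  intros H n. unfold ratio, Rdiv. rewrite <- Rmult_plus_distr_r, <- plus_INR.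
  apply Rmult_le_compat_r; [apply Rinv_INR_nonneg | apply le_INR, cnt_le_add, H].
Qed.

Lemma ratio_add_le X Y Z :
  (forall x, Nat.b2n (X x) + Nat.b2n (Y x) <= Nat.b2n (Z x))%nat ->
  forall n, ratio X n + ratio Y n <= ratio Z n.
Proof.
  intros H n. unfold ratio, Rdiv. rewrite <- Rmult_plus_distr_r, <- plus_INR.
  apply Rmult_le_compat_r; [apply Rinv_INR_nonneg | apply le_INR, cnt_add_le, H].
Qed.

Lemma is_LimSup_nu_plus A : is_LimSup_seq (ratio A) (nu_plus A).
Proof.
  unfold nu_plus. destruct (ex_LimSup_seq (ratio A)) as [l Hl].
  rewrite (is_LimSup_seq_unique _ _ Hl).
  destruct l as [l| |]; simpl; [exact Hl| |].
  - destruct (Hl 2 0%nat) as [n [_ Hn]]. pose proof (ratio_bounds A n). lra.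
  - destruct (Hl (-1)) as [N HN]. specialize (HN N (le_n _)). pose proof (ratio_bounds A N). lra.
Qed.

Lemma is_LimInf_nu_minus A : is_LimInf_seq (ratio A) (nu_minus A).
Proof.
  unfold nu_minus. destruct (ex_LimInf_seq (ratio A)) as [l Hl].
  rewrite (is_LimInf_seq_unique _ _ Hl).
  destruct l as [l| |]; simpl; [exact Hl| |].
  - destruct (Hl 2) as [N HN]. specialize (HN N (le_n _)). pose proof (ratio_bounds A N). lra.
  - destruct (Hl (-1) 0%nat) as [n [_ Hn]]. pose proof (ratio_bounds A n). lra.
Qed.

Lemma ratio_eventually_lt_nu_plus A eps :
  0 < eps -> exists N, forall n, (N <= n)%nat -> ratio A n < nu_plus A + eps.
Proof. intros He. exact (proj2 (is_LimSup_nu_plus A (mkposreal eps He))). Qed.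

Lemma ratio_frequently_gt_nu_plus A eps :
  0 < eps -> forall N, exists n, (N <= n)%nat /\ nu_plus A - eps < ratio A n.
Proof. intros He. exact (proj1 (is_LimSup_nu_plus A (mkposreal eps He))). Qed.

Lemma ratio_eventually_gt_nu_minus A eps :
  0 < eps -> exists N, forall n, (N <= n)%nat -> nu_minus A - eps < ratio A n.
Proof. intros He. exact (proj2 (is_LimInf_nu_minus A (mkposreal eps He))). Qed.

Lemma ratio_frequently_lt_nu_minus A eps :
  0 < eps -> forall N, exists n, (N <= n)%nat /\ ratio A n < nu_minus A + eps.
Proof. intros He. exact (proj1 (is_LimInf_nu_minus A (mkposreal eps He))). Qed.

Lemma nu_plus_le_of_eventually A c :
  (forall eps, 0 < eps -> exists N, forall n, (N <= n)%nat -> ratio A n <= c + eps) ->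
  nu_plus A <= c.
Proof.
  intros H. apply Rle_plus_epsilon. intros eps He.
  destruct (H (eps/2)) as [N HN]; [lra|].
  destruct (ratio_frequently_gt_nu_plus A (eps/2) ltac:(lra) N) as [n [Hn Hgt]].
  specialize (HN n Hn). lra.
Qed.

Lemma nu_plus_nonneg A : 0 <= nu_plus A.
Proof.
  apply Rnot_lt_le. intros Hlt.
  destruct (ratio_eventually_lt_nu_plus A (- nu_plus A / 2) ltac:(lra)) as [N HN].
  specialize (HN N (le_n _)). pose proof (ratio_bounds A N). lra.
Qed.

Lemma nu_minus_le_nu_plus A : nu_minus A <= nu_plus A.
Proof.
  apply Rle_plus_epsilon. intros eps He.
  destruct (ratio_eventually_gt_nu_minus A (eps/2) ltac:(lra)) as [N1 H1].
  destruct (ratio_eventually_lt_nu_plus A (eps/2) ltac:(lra)) as [N2 H2].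
  specialize (H1 (N1 + N2)%nat ltac:(lia)). specialize (H2 (N1 + N2)%nat ltac:(lia)). lra.
Qed.

Lemma nu_plus_le_add X Y Z :
  (forall x, Nat.b2n (X x) <= Nat.b2n (Y x) + Nat.b2n (Z x))%nat ->
  nu_plus X <= nu_plus Y + nu_plus Z.
Proof.
  intros H. apply nu_plus_le_of_eventually. intros eps He.
  destruct (ratio_eventually_lt_nu_plus Y (eps/2) ltac:(lra)) as [N1 H1].
  destruct (ratio_eventually_lt_nu_plus Z (eps/2) ltac:(lra)) as [N2 H2].
  exists (N1 + N2)%nat. intros n Hn.
  pose proof (ratio_le_add X Y Z H n).
  specialize (H1 n ltac:(lia)). specialize (H2 n ltac:(lia)). lra.
Qed.

Lemma nu_minus_le_add X Y Z :
  (forall x, Nat.b2n (X x) <= Nat.b2n (Y x) + Nat.b2n (Z x))%nat ->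
  nu_minus X <= nu_minus Y + nu_plus Z.
Proof.
  intros H. apply Rle_plus_epsilon. intros eps He.
  destruct (ratio_eventually_gt_nu_minus X (eps/3) ltac:(lra)) as [N1 H1].
  destruct (ratio_eventually_lt_nu_plus Z (eps/3) ltac:(lra)) as [N2 H2].
  destruct (ratio_frequently_lt_nu_minus Y (eps/3) ltac:(lra) (N1 + N2)%nat) as [n [Hn H3]].
  pose proof (ratio_le_add X Y Z H n).
  specialize (H1 n ltac:(lia)). specialize (H2 n ltac:(lia)). lra.
Qed.

Lemma nu_plus_add_le X Y Z :
  (forall x, Nat.b2n (X x) + Nat.b2n (Y x) <= Nat.b2n (Z x))%nat ->
  nu_plus X + nu_minus Y <= nu_plus Z.
Proof.
  intros H. apply Rle_plus_epsilon. intros eps He.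
  destruct (ratio_eventually_gt_nu_minus Y (eps/3) ltac:(lra)) as [N1 H1].
  destruct (ratio_eventually_lt_nu_plus Z (eps/3) ltac:(lra)) as [N2 H2].
  destruct (ratio_frequently_gt_nu_plus X (eps/3) ltac:(lra) (N1 + N2)%nat) as [n [Hn H3]].
  pose proof (ratio_add_le X Y Z H n).
  specialize (H1 n ltac:(lia)). specialize (H2 n ltac:(lia)). lra.
Qed.

Lemma inD_iff A : inD A <-> nu_minus A = nu_plus A.
Proof.
  split.
  - intros [l Hl]. apply is_lim_seq_spec in Hl.
    apply Rle_antisym; [apply nu_minus_le_nu_plus|]. apply (Rle_trans _ l).
    + apply nu_plus_le_of_eventually. intros eps He.
      destruct (Hl (mkposreal eps He)) as [N HN]. exists N. intros n Hn.
      specialize (HN n Hn). apply Rabs_lt_between in HN. simpl in HN. lra.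
    + apply Rle_plus_epsilon. intros eps He.
      destruct (Hl (mkposreal (eps/2) ltac:(lra))) as [N HN].
      destruct (ratio_frequently_lt_nu_minus A (eps/2) ltac:(lra) N) as [n [Hn Hlt]].
      specialize (HN n Hn). apply Rabs_lt_between in HN. simpl in HN. lra.
  - intros Heq. exists (nu_plus A). apply is_lim_seq_spec. intros eps.
    destruct (ratio_eventually_gt_nu_minus A eps (cond_pos eps)) as [N1 H1].
    destruct (ratio_eventually_lt_nu_plus A eps (cond_pos eps)) as [N2 H2].
    exists (N1 + N2)%nat. intros n Hn. apply Rabs_lt_between.
    specialize (H1 n ltac:(lia)). specialize (H2 n ltac:(lia)). lra.
Qed.

Lemma dd_nonneg A B : 0 <= dd A B.
Proof. apply nu_plus_nonneg. Qed.

Lemma dd_comm A B : dd A B = dd B A.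
Proof.
  unfold dd, symdiff. f_equal. apply functional_extensionality. intros x. apply Bool.xorb_comm.
Qed.

Lemma dd_triangle A B C : dd A C <= dd A B + dd B C.
Proof.
  apply nu_plus_le_add. intros x. unfold symdiff.
  destruct (A x), (B x), (C x); simpl; lia.
Qed.

Lemma dd_union_le X Y A : dd (fun x => orb (X x) (Y x)) A <= dd X A + dd Y A.
Proof.
  apply nu_plus_le_add. intros x. unfold symdiff.
  destruct (X x), (Y x), (A x); simpl; lia.
Qed.

Lemma dd_incl A B :
  (forall x, A x = true -> B x = true) -> dd A B <= nu_plus B - nu_minus A.
Proof.
  intros H. enough (nu_plus (symdiff A B) + nu_minus A <= nu_plus B) by (unfold dd; lra).
  apply nu_plus_add_le. intros x. specialize (H x). unfold symdiff.
  destruct (A x), (B x); simpl; lia.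
Qed.

Definition nonexpansive (f : nset -> R) : Prop := forall A B, Rabs (f A - f B) <= dd A B.

Lemma nu_plus_nonexpansive : nonexpansive nu_plus.
Proof.
  intros A B. apply Rabs_le_between. unfold dd.
  enough (nu_plus A <= nu_plus B + nu_plus (symdiff A B) /\
          nu_plus B <= nu_plus A + nu_plus (symdiff A B)) by lra.
  split; apply nu_plus_le_add; intros x; unfold symdiff; destruct (A x), (B x); simpl; lia.
Qed.

Lemma nu_minus_nonexpansive : nonexpansive nu_minus.
Proof.
  intros A B. apply Rabs_le_between. unfold dd.
  enough (nu_minus A <= nu_minus B + nu_plus (symdiff A B) /\
          nu_minus B <= nu_minus A + nu_plus (symdiff A B)) by lra.
  split; apply nu_minus_le_add; intros x; unfold symdiff; destruct (A x), (B x); simpl; lia.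
Qed.

Lemma dd_nonexpansive A : nonexpansive (fun X => dd X A).
Proof.
  intros X Y. apply Rabs_le_between.
  pose proof (dd_triangle X Y A). pose proof (dd_triangle Y X A).
  rewrite (dd_comm Y X) in *. lra.
Qed.

Lemma union_range_spec A i j x :
  union_range A i j x = true <-> exists k, (i <= k <= j)%nat /\ A k x = true.
Proof.
  unfold union_range. rewrite existsb_exists. split.
  - intros [k [Hk1 Hk2]]. apply in_seq in Hk1. exists k. split; [lia | exact Hk2].
  - intros [k [Hk1 Hk2]]. exists k. split; [apply in_seq; lia | exact Hk2].
Qed.

Lemma union_range_mono A i j i' j' x :
  (i' <= i)%nat -> (j <= j')%nat -> union_range A i j x = true -> union_range A i' j' x = true.
Proof.
  intros Hi Hj H. apply union_range_spec in H. destruct H as [k [Hk HA]].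
  apply union_range_spec. exists k. split; [lia | exact HA].
Qed.

Lemma union_range_diag A p : union_range A p p = A p.
Proof.
  apply functional_extensionality. intros x. unfold union_range.
  replace (S p - p)%nat with 1%nat by lia. simpl. apply Bool.orb_false_r.
Qed.

Lemma union_range_S A i j :
  (i <= S j)%nat -> union_range A i (S j) = fun x => orb (union_range A i j x) (A (S j) x).
Proof.
  intros Hij. apply functional_extensionality. intros x. unfold union_range.
  replace (S (S j) - i)%nat with (S (S j - i)) by lia.
  rewrite seq_S, existsb_app. replace (i + (S j - i))%nat with (S j) by lia.
  simpl. rewrite Bool.orb_false_r. reflexivity.
Qed.

Lemma net_cvg_unique x L L' : net_cvg x L -> net_cvg x L' -> L = L'.
Proof.
  intros H H'.
  enough (Hc : forall eps, 0 < eps -> L <= L' + eps /\ L' <= L + eps).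
  { apply Rle_antisym; apply Rle_plus_epsilon; intros eps He; apply Hc, He. }
  intros eps He.
  destruct (H (eps/2) ltac:(lra)) as [i0 [j0 [_ H0]]].
  destruct (H' (eps/2) ltac:(lra)) as [i1 [j1 [_ H1]]].
  specialize (H0 (i0 + i1) (i0 + i1 + j0 + j1))%nat.
  specialize (H1 (i0 + i1) (i0 + i1 + j0 + j1))%nat.
  rewrite Rabs_lt_between in H0, H1.
  specialize (H0 ltac:(lia) ltac:(lia) ltac:(lia)).
  specialize (H1 ltac:(lia) ltac:(lia) ltac:(lia)).
  lra.
Qed.

Lemma net_cvg_nonexpansive f U A :
  nonexpansive f -> net_cvg (fun i j => dd (U i j) A) 0 ->
  net_cvg (fun i j => f (U i j)) (f A).
Proof.
  intros Hf HU eps He. destruct (HU eps He) as [i0 [j0 [Hij0 H]]].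
  exists i0, j0. split; [exact Hij0|]. intros i j Hij Hi Hj.
  specialize (H i j Hij Hi Hj). rewrite Rminus_0_r, Rabs_pos_eq in H by apply dd_nonneg.
  eapply Rle_lt_trans; [apply Hf | exact H].
Qed.

Definition dd_cauchy (X : nat -> nset) : Prop :=
  forall eps, 0 < eps -> exists K, forall p q, (K <= p)%nat -> (K <= q)%nat -> dd (X p) (X q) < eps.

Definition dd_seq_cvg (X : nat -> nset) (B : nset) : Prop :=
  forall eps, 0 < eps -> exists K, forall p, (K <= p)%nat -> dd (X p) B < eps.

Fixpoint block_index (Nf : nat -> nat) (n t : nat) : nat :=
  match t with
  | O => O
  | S t' => if Nat.leb (Nf (S t')) n then S t' else block_index Nf n t'
  end.

(* [block_index Nf n n] is the largest [q <= n] with [Nf q <= n] (or 0), so the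
   glued set agrees with [Y q] on the block [[Nf q, Nf (S q))]. *)
Definition glue (Nf : nat -> nat) (Y : nat -> nset) : nset :=
  fun x => Y (block_index Nf x x) x.

Section Gluing.

Variable Nf : nat -> nat.
Hypothesis Nf_gt : forall q, (q < Nf q)%nat.
Hypothesis Nf_double : forall q, (2 * Nf q <= Nf (S q))%nat.

Lemma Nf_mono a b : (a <= b)%nat -> (Nf a <= Nf b)%nat.
Proof. induction 1 as [|b _ IH]; [lia|]. specialize (Nf_double b). lia. Qed.

Lemma block_index_spec q n : (Nf q <= n < Nf (S q))%nat -> block_index Nf n n = q.
Proof.
  intros [Hq Hn].
  assert (Hgt : forall q', (q < q')%nat -> (n < Nf q')%nat)
    by (intros q' Hq'; pose proof (Nf_mono (S q) q' Hq'); lia).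
  enough (H : forall t, (q <= t)%nat -> block_index Nf n t = q)
    by (apply H; pose proof (Nf_gt q); lia).
  induction t as [|t IH]; intros Ht; simpl; [lia|].
  destruct (Nat.eq_dec q (S t)) as [->|Hne].
  - apply Nat.leb_le in Hq. rewrite Hq. reflexivity.
  - destruct (Nat.leb_spec (Nf (S t)) n) as [Hle|_]; [specialize (Hgt (S t)); lia|].
    apply IH. lia.
Qed.

Lemma block_exists m n : (Nf m <= n)%nat -> exists q, (m <= q)%nat /\ (Nf q <= n < Nf (S q))%nat.
Proof.
  intros Hm.
  enough (H : forall t p, (Nf p <= n)%nat -> (n < Nf (p + t))%nat ->
                exists q, (p <= q)%nat /\ (Nf q <= n < Nf (S q))%nat).
  { apply (H n m Hm). pose proof (Nf_gt (m + n)). lia. }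
  induction t as [|t IH]; intros p H1 H2; [rewrite Nat.add_0_r in H2; lia|].
  destruct (Compare_dec.le_lt_dec (Nf (S p)) n) as [H3|H3].
  - destruct (IH (S p) H3) as [q [Hq1 Hq2]]; [replace (S p + t)%nat with (p + S t)%nat by lia; exact H2|].
    exists q. split; [lia | exact Hq2].
  - exists p. split; lia.
Qed.

Variables (Y : nat -> nset) (m : nat) (c : R).
Hypothesis ratio_tail :
  forall q n, (m <= q)%nat -> (Nf q <= n)%nat -> ratio (symdiff (Y q) (Y m)) n <= c.

Lemma glue_block q x : (Nf q <= x < Nf (S q))%nat -> glue Nf Y x = Y q x.
Proof. intros Hx. unfold glue. rewrite (block_index_spec q x Hx). reflexivity. Qed.

Lemma tail_bound_nonneg : 0 <= c.
Proof.
  pose proof (ratio_tail m (Nf m) (le_n _) (le_n _)).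
  pose proof (ratio_bounds (symdiff (Y m) (Y m)) (Nf m)). lra.
Qed.

(* Block [q] contributes at most [c] times its right end, so the total up to [N]
   telescopes against the doubling of [Nf]. *)
Lemma cnt_glue_le q N :
  (m <= q)%nat -> (Nf q <= N <= Nf (S q))%nat ->
  INR (cnt (symdiff (glue Nf Y) (Y m)) N) <= INR (Nf m) + c * (2 * INR (Nf q) + INR N).
Proof.
  pose proof tail_bound_nonneg as Hc.
  set (D := symdiff (glue Nf Y) (Y m)).
  intros Hmq. revert N. induction Hmq as [|q Hmq IH]; intros N HN.
  - pose proof (cnt_agree D (symdiff (Y m) (Y m)) (Nf m) (N - Nf m)) as Hag.
    replace (Nf m + (N - Nf m))%nat with N in Hag by lia.
    rewrite !(cnt_empty (symdiff (Y m) (Y m))) in Hag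
      by (intros x; apply Bool.xorb_nilpotent).
    assert (Hle : (cnt D N <= Nf m)%nat).
    { specialize (Hag ltac:(intros x Hx; unfold D, symdiff; rewrite (glue_block m x) by lia; reflexivity)).
      pose proof (cnt_le D (Nf m)). lia. }
    apply le_INR in Hle. pose proof (pos_INR (Nf m)). pose proof (pos_INR N). nra.
  - set (Dq := symdiff (Y (S q)) (Y m)).
    pose proof (cnt_agree D Dq (Nf (S q)) (N - Nf (S q))) as Hag.
    replace (Nf (S q) + (N - Nf (S q)))%nat with N in Hag by lia.
    assert (Hle : (cnt D N <= cnt D (Nf (S q)) + cnt Dq N)%nat).
    { specialize (Hag ltac:(intros x Hx; unfold D, Dq, symdiff; rewrite (glue_block (S q) x) by lia; reflexivity)).
      lia. }
    apply le_INR in Hle. rewrite plus_INR in Hle.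
    specialize (IH (Nf (S q)) ltac:(split; [apply Nf_mono|]; lia)).
    assert (HDq : INR (cnt Dq N) <= c * INR N).
    { apply cnt_le_of_ratio; [pose proof (Nf_gt (S q)); lia|]. apply ratio_tail; lia. }
    assert (Hdbl : 2 * INR (Nf q) <= INR (Nf (S q))).
    { replace 2 with (INR 2) by (simpl; lra). rewrite <- mult_INR. apply le_INR, Nf_double. }
    pose proof (pos_INR N). nra.
Qed.

Lemma dd_glue_le : dd (glue Nf Y) (Y m) <= 3 * c.
Proof.
  pose proof tail_bound_nonneg as Hc.
  apply nu_plus_le_of_eventually. intros eps He.
  destruct (INR_unbounded (INR (Nf m) / eps)) as [K HK].
  exists (Nf m + K)%nat. intros n Hn.
  destruct (block_exists m n) as [q [Hmq Hq]]; [lia|].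
  pose proof (cnt_glue_le q n Hmq ltac:(lia)) as Hcnt.
  apply ratio_le_of_cnt; [pose proof (Nf_gt m); lia|].
  assert (HKn : INR K <= INR n) by (apply le_INR; lia).
  assert (Hqn : INR (Nf q) <= INR n) by (apply le_INR; lia).
  assert (HmK : INR (Nf m) < eps * INR K).
  { apply Rgt_lt, (Rmult_lt_compat_r eps) in HK; [|exact He].
    unfold Rdiv in HK. rewrite Rmult_assoc, Rinv_l, Rmult_1_r in HK by lra. lra. }
  nra.
Qed.

End Gluing.

Fixpoint thresholds (g : nat -> nat) (q : nat) : nat :=
  match q with
  | O => S (g O)
  | S q' => (g (S q') + 2 * thresholds g q')%nat
  end.

Lemma eventually_forall_le (P : nat -> nat -> Prop) r :
  (forall m, (m <= r)%nat -> exists N, forall n, (N <= n)%nat -> P m n) ->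
  exists N, forall m n, (m <= r)%nat -> (N <= n)%nat -> P m n.
Proof.
  induction r as [|r IH]; intros H.
  - destruct (H 0%nat (le_n _)) as [N HN]. exists N. intros m n Hm Hn.
    replace m with 0%nat by lia. exact (HN n Hn).
  - destruct IH as [N1 H1]; [intros m Hm; apply H; lia|].
    destruct (H (S r) (le_n _)) as [N2 H2]. exists (N1 + N2)%nat. intros m n Hm Hn.
    destruct (Nat.eq_dec m (S r)) as [->|Hne]; [apply H2 | apply H1]; lia.
Qed.

(* The blocks end at points [thresholds g q] that at least double and lie past the
   index [g q] from which [Y q] is within ratio [2 * delta m] of every [Y m], [m <= q]. *)
Lemma fast_cauchy_cvg (Y : nat -> nset) (delta : nat -> R) :
  (forall m, 0 < delta m) ->
  (forall m q, (m <= q)%nat -> dd (Y q) (Y m) <= delta m) ->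
  exists B, forall m, dd B (Y m) <= 6 * delta m.
Proof.
  intros Hpos HY.
  assert (Hg : forall q, exists N, forall m n, (m <= q)%nat -> (N <= n)%nat ->
                 ratio (symdiff (Y q) (Y m)) n <= 2 * delta m).
  { intros q. apply eventually_forall_le. intros m Hmq.
    destruct (ratio_eventually_lt_nu_plus (symdiff (Y q) (Y m)) (delta m) (Hpos m)) as [N HN].
    exists N. intros n Hn. specialize (HN n Hn). specialize (HY m q Hmq). unfold dd in HY. lra. }
  destruct (choice _ Hg) as [g Hgs].
  assert (Hge : forall q, (g q <= thresholds g q)%nat) by (intros [|q]; simpl; lia).
  assert (Hgt : forall q, (q < thresholds g q)%nat) by (induction q; simpl; lia).
  assert (Hdbl : forall q, (2 * thresholds g q <= thresholds g (S q))%nat) by (intros q; simpl; lia).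
  exists (glue (thresholds g) Y). intros m. replace (6 * delta m) with (3 * (2 * delta m)) by ring.
  apply dd_glue_le; [exact Hgt | exact Hdbl |].
  intros q n Hmq Hn. apply Hgs; [exact Hmq | specialize (Hge q); lia].
Qed.

Lemma monotone_majorant (K : nat -> nat) :
  exists phi, (forall m, (K m <= phi m)%nat) /\ (forall a b, (a <= b)%nat -> (phi a <= phi b)%nat).
Proof.
  exists (fix phi m := match m with O => K O | S m' => (phi m' + K (S m'))%nat end).
  split; [intros [|m]; simpl; lia|].
  induction 1; simpl; lia.
Qed.

Lemma dd_cauchy_cvg X : dd_cauchy X -> exists B, dd_seq_cvg X B.
Proof.
  intros HC.
  assert (Hpos : forall m, 0 < (1/2)^m) by (intros m; apply pow_lt; lra).
  destruct (choice (fun m K => forall p q, (K <= p)%nat -> (K <= q)%nat -> dd (X p) (X q) < (1/2)^m)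
              (fun m => HC _ (Hpos m))) as [K HK].
  destruct (monotone_majorant K) as [phi [HKphi Hphi]].
  destruct (fast_cauchy_cvg (fun m => X (phi m)) (fun m => (1/2)^m) Hpos) as [B HB].
  { intros m q Hmq. apply Rlt_le, HK; [|apply HKphi].
    specialize (HKphi m). specialize (Hphi m q Hmq). lia. }
  exists B. intros eps He.
  destruct (pow_lt_1_zero (1/2) ltac:(rewrite Rabs_pos_eq; lra) (eps/7) ltac:(lra)) as [N HN].
  exists (phi N). intros p Hp.
  specialize (HN N (le_n _)). rewrite Rabs_pos_eq in HN by (apply Rlt_le, Hpos).
  specialize (HB N). simpl in HB. rewrite dd_comm in HB.
  pose proof (HK N p (phi N) ltac:(specialize (HKphi N); lia) (HKphi N)).
  pose proof (dd_triangle (X p) (X (phi N)) B). lra.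
Qed.

Lemma union_net_cauchy A L :
  net_cvg (fun i j => nu_plus (union_range A i j)) L ->
  net_cvg (fun i j => nu_minus (union_range A i j)) L ->
  forall eps, 0 < eps -> exists i0 j0, forall i j i' j',
    (i <= j)%nat -> (i' <= j')%nat -> (i0 <= i)%nat -> (j0 <= j)%nat ->
    (i0 <= i')%nat -> (j0 <= j')%nat ->
    dd (union_range A i j) (union_range A i' j') < eps.
Proof.
  intros Hp Hm eps He.
  destruct (Hp (eps/4) ltac:(lra)) as [i1 [j1 [_ H1]]].
  destruct (Hm (eps/4) ltac:(lra)) as [i2 [j2 [_ H2]]].
  exists (i1 + i2)%nat, (j1 + j2)%nat. intros i j i' j' Hij Hij' Hi Hj Hi' Hj'.
  set (lo := Nat.min i i'). set (hi := Nat.max j j').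
  assert (Hsub : forall a b, (a <= b)%nat -> (i1 + i2 <= a)%nat -> (j1 + j2 <= b)%nat ->
            (lo <= a)%nat -> (b <= hi)%nat ->
            dd (union_range A a b) (union_range A lo hi) < eps / 2).
  { intros a b Hab Ha Hb Hla Hbh.
    eapply Rle_lt_trans; [apply dd_incl; intros x; apply union_range_mono; assumption|].
    specialize (H1 lo hi ltac:(lia) ltac:(lia) ltac:(lia)).
    specialize (H2 a b Hab ltac:(lia) ltac:(lia)).
    apply Rabs_lt_between in H1, H2. lra. }
  pose proof (Hsub i j Hij Hi Hj ltac:(lia) ltac:(lia)).
  pose proof (Hsub i' j' Hij' Hi' Hj' ltac:(lia) ltac:(lia)).
  pose proof (dd_triangle (union_range A i j) (union_range A lo hi) (union_range A i' j')).
  rewrite (dd_comm (union_range A lo hi)) in *. lra.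
Qed.

Lemma union_net_cvg A L :
  net_cvg (fun i j => nu_plus (union_range A i j)) L ->
  net_cvg (fun i j => nu_minus (union_range A i j)) L ->
  exists B, net_cvg (fun i j => dd (union_range A i j) B) 0.
Proof.
  intros Hp Hm. pose proof (union_net_cauchy A L Hp Hm) as HC.
  destruct (dd_cauchy_cvg A) as [B HB].
  { intros eps He. destruct (HC eps He) as [i0 [j0 H]]. exists (i0 + j0)%nat.
    intros p q Hp' Hq'. rewrite <- (union_range_diag A p), <- (union_range_diag A q). apply H; lia. }
  exists B. intros eps He.
  destruct (HC (eps/2) ltac:(lra)) as [i0 [j0 H]].
  destruct (HB (eps/2) ltac:(lra)) as [K HK].
  exists i0, (i0 + j0)%nat. split; [lia|]. intros i j Hij Hi Hj.
  set (p := (i0 + j0 + K)%nat).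
  specialize (H i j p p Hij (le_n _) Hi ltac:(lia) ltac:(unfold p; lia) ltac:(unfold p; lia)).
  specialize (HK p ltac:(unfold p; lia)). rewrite <- (union_range_diag A p) in HK.
  pose proof (dd_triangle (union_range A i j) (union_range A p p) B).
  rewrite Rminus_0_r, Rabs_pos_eq by apply dd_nonneg. lra.
Qed.

Lemma union_range_dd_le X A i j :
  (forall k, dd (X k) A <= (1/2)^k) -> (i <= j)%nat ->
  dd (union_range X i j) A <= 2 * (1/2)^i - (1/2)^j.
Proof.
  intros HX Hij. induction Hij as [|j Hij IH].
  - rewrite union_range_diag. specialize (HX i). lra.
  - rewrite union_range_S by lia. eapply Rle_trans; [apply dd_union_le|].
    specialize (HX (S j)). simpl in HX |- *. lra.
Qed.

Lemma union_net_cvg_geometric X A :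
  (forall k, dd (X k) A <= (1/2)^k) -> net_cvg (fun i j => dd (union_range X i j) A) 0.
Proof.
  intros HX eps He.
  destruct (pow_lt_1_zero (1/2) ltac:(rewrite Rabs_pos_eq; lra) (eps/2) ltac:(lra)) as [N HN].
  exists N, N. split; [lia|]. intros i j Hij Hi _.
  specialize (HN i Hi). rewrite Rabs_pos_eq in HN by (apply pow_le; lra).
  pose proof (union_range_dd_le X A i j HX Hij). pose proof (pow_lt (1/2) j ltac:(lra)).
  rewrite Rminus_0_r, Rabs_pos_eq by apply dd_nonneg. lra.
Qed.

Lemma closedD_adherent E :
  quot_subset E ->
  closedD E <->
  (forall A, inD A -> (forall eps, 0 < eps -> exists C, E C /\ dd C A < eps) -> E A).
Proof.
  intros [HED _]. split.
  - intros Hcl A HA Hadh. apply NNPP. intros HnE.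
    destruct (Hcl A HA HnE) as [eps [He Hball]].
    destruct (Hadh eps He) as [C [HC HCA]].
    apply (Hball C (HED C HC)); [rewrite dd_comm; exact HCA | exact HC].
  - intros Hadh A HA HnE. apply NNPP. intros Hno. apply HnE, Hadh; [exact HA|].
    intros eps He. apply NNPP. intros Hfar. apply Hno. exists eps. split; [exact He|].
    intros B _ HAB HB. apply Hfar. exists B. split; [exact HB | rewrite dd_comm; exact HAB].
Qed.

Theorem theorem1p2 (E : nset -> Prop) (HE : quot_subset E) :
  closedD E <->
  (forall (A : nat -> nset), (forall i, E (A i)) ->
     forall L : R,
       net_cvg (fun i j => nu_plus (union_range A i j)) L ->
       net_cvg (fun i j => nu_minus (union_range A i j)) L ->
       exists B, E B /\
         net_cvg (fun i j => dd (union_range A i j) B) 0 /\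
         nu_plus B = L).
Proof.
  rewrite (closedD_adherent E HE). split.
  - intros Hadh A HA L Hp Hm.
    destruct (union_net_cvg A L Hp Hm) as [B HB].
    assert (HpB : nu_plus B = L)
      by exact (net_cvg_unique _ _ _ (net_cvg_nonexpansive _ _ _ nu_plus_nonexpansive HB) Hp).
    assert (HmB : nu_minus B = L)
      by exact (net_cvg_unique _ _ _ (net_cvg_nonexpansive _ _ _ nu_minus_nonexpansive HB) Hm).
    exists B. split; [|split; [exact HB | exact HpB]].
    apply Hadh; [apply inD_iff; congruence|].
    intros eps He. destruct (HB eps He) as [i0 [j0 [_ H]]].
    exists (A (i0 + j0)%nat). split; [apply HA|].
    specialize (H (i0 + j0) (i0 + j0) (le_n _) ltac:(lia) ltac:(lia))%nat.
    rewrite union_range_diag, Rminus_0_r, Rabs_pos_eq in H by apply dd_nonneg. exact H.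
  - intros Hcond A HA Hadh.
    destruct (choice (fun n C => E C /\ dd C A < (1/2)^n)
                (fun n => Hadh _ (pow_lt (1/2) n ltac:(lra)))) as [X HX].
    assert (HU := union_net_cvg_geometric X A (fun k => Rlt_le _ _ (proj2 (HX k)))).
    destruct (Hcond X (fun k => proj1 (HX k)) (nu_plus A)) as [B [HB [HUB _]]].
    + exact (net_cvg_nonexpansive _ _ _ nu_plus_nonexpansive HU).
    + rewrite <- (proj1 (inD_iff A) HA).
      exact (net_cvg_nonexpansive _ _ _ nu_minus_nonexpansive HU).
    + apply (proj2 HE B A HB). symmetry.
      exact (net_cvg_unique _ _ _ HU (net_cvg_nonexpansive _ _ _ (dd_nonexpansive A) HUB)).
Qed.
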